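(* Let $I(z)$ be a nonzero polynomial solution of the KZ system over $\mathbb{F}_p$ and let $C z_1^{d_1}\cdots z_n^{d_n}$, $C=(C_1,\dots,C_n)\in\mathbb{F}_p^n$, be its $\mathrm{id}$-leading term. Then, with $C$ as a column vector and equalities in $\mathbb{F}_p$, $$\sum_{j=1}^nm_jC_j=0,\qquad \sum_{l=j+1}^n\Omega_{jl}C=q\,d_j\,C\ \ (j=1,\dots,n-1),\qquad d_n\equiv0\pmod p.$$
   Context: Let $p,q$ be primes and $n$ a positive integer with $p>n\ge2$, $p>q$. Fix positive integers $m_1,\dots,m_n<q$. For $i\ne j$ let $\Omega_{ij}$ be the $n\times n$ matrix whose only nonzero entries are $(\Omega_{ij})_{ii}=-m_j$, $(\Omega_{ij})_{ij}=m_j$, $(\Omega_{ij})_{ji}=m_i$, $(\Omega_{ij})_{jj}=-m_i$. A polynomial solution of the KZ system over $\mathbb{F}_p$ is $I(z)=(I_1,\dots,I_n)\in\mathbb{F}_p[z_1,\dots,z_n]^n$ with $\partial I/\partial z_i=q^{-1}\sum_{j\ne i}\Omega_{ij}I/(z_i-z_j)$ for all $i$ and $\sum_im_iI_i=0$ (computed in $\mathbb{F}_p$). Monomials $z^d$ are ordered lexicographically by $(d_1,\dots,d_n)$ (so $z_1>\dots>z_n$); the $\mathrm{id}$-leading term of a nonzero $f\in\mathbb{F}_p[z]^n$ is $a z^d$ with $z^d$ the largest monomial having nonzero coefficient $a\in\mathbb{F}_p^n$. *)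

From HB Require Import structures.
From mathcomp Require Import all_boot all_algebra.
From mathcomp Require Import fraction.
From mathcomp Require Import mpoly.
Set Implicit Arguments. Unset Strict Implicit. Unset Printing Implicit Defensive.
Import GRing.Theory.
Local Open Scope ring_scope.

Definition Omega (p n : nat) (m : 'I_n -> nat) (i j : 'I_n) : 'M['F_p]_n :=
  \matrix_(a < n, b < n)
    (if (a == i) && (b == i) then - (m j)%:R
     else if (a == i) && (b == j) then (m j)%:R
     else if (a == j) && (b == i) then (m i)%:R
     else if (a == j) && (b == j) then - (m i)%:R
     else 0).

Definition mx_act (p n : nat) (A : 'M['F_p]_n) (I : 'I_n -> {mpoly 'F_p[n]})
  : 'I_n -> {mpoly 'F_p[n]} :=
  fun k => \sum_(l < n) A k l *: I l.

Notation tofrac := (@FracField.tofrac _).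

Definition is_KZ_solution (p q n : nat) (m : 'I_n -> nat)
  (I : 'I_n -> {mpoly 'F_p[n]}) : Prop :=
  (forall (i k : 'I_n),
     tofrac (mderiv i (I k)) =
       (q%:R)^-1 * \sum_(j < n | j != i)
          tofrac (mx_act (Omega p m i j) I k) / tofrac ('X_i - 'X_j))
  /\ \sum_(i < n) (m i)%:R *: I i = 0.

(* lexicographic (non-strict) order on exponent sequences, z_1 > ... > z_n *)
Fixpoint lexle (s t : seq nat) : bool :=
  match s, t with
  | x :: s', y :: t' => (x < y)%N || ((x == y) && lexle s' t')
  | _, _ => true
  end.

Definition mlexle (n : nat) (d e : 'X_{1..n}) : bool :=
  lexle (val (val d)) (val (val e)).

Definition is_id_leading_term (p n : nat) (I : 'I_n -> {mpoly 'F_p[n]})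
  (C : 'cV['F_p]_n) (d : 'X_{1..n}) : Prop :=
  C != 0 /\ (forall k, C k 0 = (I k)@_d) /\
  (forall (e : 'X_{1..n}) (k : 'I_n), (I k)@_e != 0 -> mlexle e d).

From mathcomp Require Import all_boot all_order all_algebra.
From mathcomp Require Import fraction.
From mathcomp Require Import mpoly.
Set Implicit Arguments. Unset Strict Implicit. Unset Printing Implicit Defensive.
Import Order.POrderTheory GRing.Theory.
Local Open Scope ring_scope.

(* Multiply the i-th KZ equation by q X_i prod_{l <> i} (X_i - X_l) to get a
   polynomial identity, and compare the coefficients of z^(d + mu), where mu is
   the lex-leading exponent of prod_{l <> i} (X_i - X_l).  Lex-leading terms
   multiply, so the left side gives q d_i C up to the sign s = lead coefficient
   of the product.  On the right, the j-th summand carries the cofactor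
   X_i prod_{l <> i, j} (X_i - X_l): for i < j it contributes Omega_ij C s, and
   for j < i its exponents stay strictly below d + mu, because the leading
   exponent of X_i - X_j is then U_j rather than U_i.  For the last variable the
   right side is empty, so q d_n C = 0 with C <> 0 and p not dividing q. *)

Lemma lexleE (s t : seq nat) :
  size s = size t -> lexle s t = (s <= t :> seqlexi nat)%O.
Proof.
elim: s t => [|x s IH] [|y t] //= [/IH ->].
by rewrite lexi_cons !leEnat; case: ltngtP => //= _; rewrite ?eqxx.
Qed.

Section MonomialLex.
Variable n : nat.
Implicit Types a b c : 'X_{1..n}.

Lemma mlexleE a b : mlexle a b = (val a <= val b :> n.-tuplelexi nat)%O.
Proof. by rewrite /mlexle lexleE // !size_tuple. Qed.

Lemma mlexle_refl a : mlexle a a.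
Proof. by rewrite mlexleE. Qed.

Lemma mlexle_trans a b c : mlexle a b -> mlexle b c -> mlexle a c.
Proof. rewrite !mlexleE; exact: le_trans. Qed.

Lemma mlexle_anti a b : mlexle a b -> mlexle b a -> a = b.
Proof.
by rewrite !mlexleE => ab ba; apply/val_inj/(@le_anti _ (n.-tuplelexi nat)); rewrite ab ba.
Qed.

Lemma mlexleD2r a b c : mlexle a b -> mlexle (a + c)%MM (b + c)%MM.
Proof.
rewrite !mlexleE le_eqVlt => /orP[/eqP/val_inj-> // | /ltxi_tuplePlt[k eq_ab lt_ab]].
apply/ltW/ltxi_tuplePlt; exists k => [i lt_ik|]; rewrite -!mnm_tnth !mnmDE.
  by rewrite !mnm_tnth eq_ab.
by rewrite !mnm_tnth ltEnat /= ltn_add2r.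
Qed.

Lemma mlexleD2l a b c : mlexle a b -> mlexle (c + a)%MM (c + b)%MM.
Proof. by rewrite ![(c + _)%MM]addmC; apply: mlexleD2r. Qed.

Lemma mlexleD a b c c' : mlexle a b -> mlexle c c' -> mlexle (a + c)%MM (b + c')%MM.
Proof. by move=> ab cc'; exact: mlexle_trans (mlexleD2r c ab) (mlexleD2l b cc'). Qed.

Lemma mlexle_add_eq a b a' b' :
  mlexle a' a -> mlexle b' b -> (a' + b' = a + b)%MM -> a' = a /\ b' = b.
Proof.
move=> a'a b'b eq_ab.
have eq_b : b' = b.
  apply/eqP; rewrite -(eqm_add2l a); apply/eqP/mlexle_anti; first exact: mlexleD2l.
  by rewrite -eq_ab; apply: mlexleD2r.
by split=> //; apply/eqP; rewrite -(eqm_add2r b) -{1}eq_b eq_ab.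
Qed.

Lemma mlexle_mnm1 (i j : 'I_n) : (i < j)%N -> mlexle U_(j) U_(i).
Proof.
move=> lt_ij; rewrite mlexleE; apply/ltW/ltxi_tuplePlt.
exists i => [l lt_li|]; rewrite -!mnm_tnth !mnm1E.
  by rewrite !eqE /= gtn_eqF ?gtn_eqF // (ltn_trans lt_li).
by rewrite eqxx eqE /= gtn_eqF.
Qed.

End MonomialLex.

Section LexLeadingTerm.
Variables (R : idomainType) (n : nat).
Implicit Types (f g : {mpoly R[n]}) (a b : 'X_{1..n}).

Definition lexbound f a := forall e, f@_e != 0 -> mlexle e a.

Definition lexlead f a c := lexbound f a /\ f@_a = c.

Lemma mcoeff_lexbound_gt f a b : lexbound f a -> mlexle a b -> a != b -> f@_b = 0.
Proof. by move=> fa ab; apply: contraNeq => /fa ba; apply/eqP/mlexle_anti. Qed.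

Lemma mcoeffM_lexbound f g a b :
  lexbound f a -> lexbound g b -> (f * g)@_(a + b) = f@_a * g@_b.
Proof.
move=> fa gb; rewrite mcoeffM.
have lt_a : (mdeg a < (mdeg (a + b)%MM).+1)%N by rewrite mdegD ltnS leq_addr.
have lt_b : (mdeg b < (mdeg (a + b)%MM).+1)%N by rewrite mdegD ltnS leq_addl.
pose ab : 'X_{1..n < (mdeg (a + b)%MM).+1, (mdeg (a + b)%MM).+1} :=
  (BMultinom lt_a, BMultinom lt_b).
rewrite (bigD1 ab) ?eqxx //= big1 ?addr0 // => -[a' b'] /= /andP[/eqP eq_ab ne_ab].
have [->|/fa a'a] := eqVneq f@_a' 0; first by rewrite mul0r.
have [->|/gb b'b] := eqVneq g@_b' 0; first by rewrite mulr0.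
have [eq_a eq_b] := mlexle_add_eq a'a b'b (esym eq_ab).
by case/eqP: ne_ab; congr (_, _); apply: val_inj.
Qed.

Lemma lexboundM f g a b : lexbound f a -> lexbound g b -> lexbound (f * g) (a + b)%MM.
Proof.
move=> fa gb e; rewrite -mcoeff_msupp => /msuppM_le /allpairsP[[a' b'] /= [a'f b'g ->]].
by rewrite !mcoeff_msupp in a'f b'g; exact: mlexleD (fa _ a'f) (gb _ b'g).
Qed.

Lemma lexleadM f g a b c c' :
  lexlead f a c -> lexlead g b c' -> lexlead (f * g) (a + b)%MM (c * c').
Proof.
by move=> [fa <-] [gb <-]; split; [exact: lexboundM | exact: mcoeffM_lexbound].
Qed.

Lemma lexlead1 : lexlead 1 0%MM 1.
Proof.
split=> [e|]; last by rewrite mcoeff1 eqxx.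
rewrite mcoeff1; case: (eqVneq e 0%MM) => [-> _|_]; first exact: mlexle_refl.
by rewrite eqxx.
Qed.

Lemma lexleadX (i : 'I_n) : lexlead 'X_i U_(i)%MM 1.
Proof.
split=> [e|]; last by rewrite mcoeffX eqxx.
rewrite mcoeffX; case: (eqVneq U_(i)%MM e) => [<- _|_]; first exact: mlexle_refl.
by rewrite eqxx.
Qed.

Lemma lexlead_prod (J : Type) (r : seq J) (P : pred J) (F : J -> {mpoly R[n]})
    (A : J -> 'X_{1..n}) (c : J -> R) :
  (forall j, P j -> lexlead (F j) (A j) (c j)) ->
  lexlead (\prod_(j <- r | P j) F j) (\sum_(j <- r | P j) A j)%MM
          (\prod_(j <- r | P j) c j).
Proof.
move=> Flead; apply: (big_rec3 (fun f a c => lexlead f a c)); first exact: lexlead1.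
by move=> j f a c0 Pj; apply: lexleadM; exact: Flead.
Qed.

Definition lexp_XsubX (i l : 'I_n) : 'X_{1..n} := U_(if (i < l)%N then i else l)%MM.

Lemma lexlead_XsubX (i l : 'I_n) : i != l ->
  lexlead ('X_i - 'X_l) (lexp_XsubX i l) ((-1) ^+ (l < i)%N).
Proof.
move=> ne_il; have ne_li : l != i by rewrite eq_sym.
rewrite /lexp_XsubX.
have supp e : ('X_i - 'X_l)@_e != 0 -> e = U_(i)%MM \/ e = U_(l)%MM.
  rewrite mcoeffB !mcoeffX.
  case: (eqVneq U_(i)%MM e) => [-> _|_]; first by left.
  case: (eqVneq U_(l)%MM e) => [-> _|_]; first by right.
  by rewrite subrr eqxx.
case: ltngtP => [lt_il|lt_li|/val_inj eq_il]; last by rewrite eq_il eqxx in ne_il.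
- split=> [e /supp[]->|]; [exact: mlexle_refl | exact: mlexle_mnm1 |].
  by rewrite mcoeffB !mcoeffXU eqxx (negbTE ne_li) subr0.
- split=> [e /supp[]->|]; [exact: mlexle_mnm1 | exact: mlexle_refl |].
  by rewrite mcoeffB !mcoeffXU eqxx (negbTE ne_il) sub0r expr1.
Qed.

Lemma lexlead_prod_XsubX (i : 'I_n) (P : pred 'I_n) : (forall l, P l -> i != l) ->
  lexlead (\prod_(l | P l) ('X_i - 'X_l)) (\sum_(l | P l) lexp_XsubX i l)%MM
          (\prod_(l | P l) (-1) ^+ (l < i)%N).
Proof. by move=> ne_iP; apply: lexlead_prod => l /ne_iP; exact: lexlead_XsubX. Qed.

Lemma mcoeff_mul_XsubX_cofactor f a (i j : 'I_n) : lexbound f a -> i != j ->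
  (f * ('X_i * \prod_(l | (l != i) && (l != j)) ('X_i - 'X_l)))
    @_(a + \sum_(l | l != i) lexp_XsubX i l)%MM
  = if (i < j)%N then f@_a * \prod_(l | l != i) (-1) ^+ (l < i)%N else 0.
Proof.
move=> fa ne_ij; have ne_ji : j != i by rewrite eq_sym.
have [cof_bound cof_top] : lexlead ('X_i * \prod_(l | (l != i) && (l != j)) ('X_i - 'X_l))
    (U_(i) + \sum_(l | (l != i) && (l != j)) lexp_XsubX i l)%MM
    (1 * \prod_(l | (l != i) && (l != j)) (-1) ^+ (l < i)%N).
  apply: lexleadM; first exact: lexleadX.
  by apply: lexlead_prod_XsubX => l /andP[ne_li _]; rewrite eq_sym.
rewrite (bigD1 j ne_ji) (bigD1 (P := fun l => l != i) j ne_ji) /= /lexp_XsubX.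
case: ltngtP => [lt_ij|lt_ji|/val_inj eq_ij]; last by rewrite eq_ij eqxx in ne_ij.
  by rewrite mcoeffM_lexbound // cof_top expr0 mul1r.
apply: mcoeff_lexbound_gt (lexboundM fa cof_bound) _ _.
  by apply/mlexleD2l/mlexleD2r/mlexle_mnm1.
by rewrite eqm_add2l eqm_add2r eq_mnm1.
Qed.

Lemma mcoeff_sumZ (J : finType) (c : J -> R) (F : J -> {mpoly R[n]}) e :
  (\sum_j c j *: F j)@_e = \sum_j c j * (F j)@_e.
Proof. by rewrite raddf_sum; apply: eq_bigr => j _; exact: mcoeffZ. Qed.

Lemma lexbound_sumZ (J : finType) (c : J -> R) (F : J -> {mpoly R[n]}) a :
  (forall j, lexbound (F j) a) -> lexbound (\sum_j c j *: F j) a.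
Proof.
move=> Fa e; apply: contraTT => not_ea; rewrite mcoeff_sumZ big1 ?eqxx // => j _.
by rewrite (contraNeq (@Fa j e) not_ea) mulr0.
Qed.

Lemma mcoeff_mderivMX (i : 'I_n) f e : (mderiv i f * 'X_i)@_e = f@_e *+ e i.
Proof.
case: (e i =P 0%N) => [ei0|/eqP ei_neq0].
  rewrite ei0 mulr0n; apply/eqP; rewrite mcoeff_eq0 (perm_mem (msuppMX _ _)).
  by apply/mapP => -[e' _ eq_e]; move: ei0; rewrite eq_e mnmDE mnm1E eqxx.
have /submK eq_e : (U_(i) <= e)%MM by rewrite lep1mP.
by rewrite -{1}eq_e addmC mcoeffMX mcoeff_deriv eq_e mnmBE mnm1E eqxx subn1 prednK ?lt0n.
Qed.

Lemma lexbound_mderivMX (i : 'I_n) f a : lexbound f a -> lexbound (mderiv i f * 'X_i) a.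
Proof.
move=> fa e; rewrite mcoeff_mderivMX => nz_e; apply: fa.
by apply: contraNneq nz_e => ->; rewrite mul0rn.
Qed.

End LexLeadingTerm.

Section KZLeadingTerm.
Variables (p q n : nat) (m : 'I_n -> nat).
Hypotheses (p_pr : prime p) (p_ndvd_q : ~~ (p %| q)%N).
Variable I : 'I_n -> {mpoly 'F_p[n]}.
Hypothesis I_KZ : is_KZ_solution q m I.

Lemma pchar_mpoly_fraction : p \in [pchar {fraction {mpoly 'F_p[n]}}].
Proof.
exact/(rmorph_pchar (@FracField.tofrac _))/(rmorph_pchar (@mpolyC n _))/pchar_Fp.
Qed.

Lemma KZ_denominators_cleared (i k : 'I_n) :
  (mderiv i (I k) * 'X_i * \prod_(l | l != i) ('X_i - 'X_l)) *+ q
  = \sum_(j | j != i)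
      mx_act (Omega p m i j) I k * ('X_i * \prod_(l | (l != i) && (l != j)) ('X_i - 'X_l)).
Proof.
have q_neq0 : q%:R != 0 :> {fraction {mpoly 'F_p[n]}}.
  by move: p_ndvd_q; rewrite -(dvdn_pcharf pchar_mpoly_fraction).
apply/eqP; rewrite -tofrac_eq; apply/eqP.
rewrite tofracMn !tofracM (I_KZ.1 i k) rmorph_sum /=.
rewrite -[_ *+ q]mulr_natl !mulrA mulfV // mul1r !mulr_suml.
apply: eq_bigr => j ne_ji; rewrite (bigD1 j ne_ji) /= !tofracM.
have XsubX_neq0 : tofrac ('X_i - 'X_j : {mpoly 'F_p[n]}) != 0.
  have /(lexlead_XsubX 'F_p)[_ lead] : i != j by rewrite eq_sym.
  by rewrite tofrac_eq0; apply: contra_eq_neq lead => ->; rewrite mcoeff0 eq_sym signr_eq0.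
by rewrite -!mulrA; congr (_ * _); rewrite mulrCA mulKf.
Qed.

Variables (C : 'cV['F_p]_n) (d : 'X_{1..n}).
Hypothesis I_lead : is_id_leading_term I C d.

Lemma lexbound_KZ k : lexbound (I k) d.
Proof. by move=> e; exact: I_lead.2.2. Qed.

Lemma lexbound_mx_act (A : 'M['F_p]_n) k : lexbound (mx_act A I k) d.
Proof. by apply: lexbound_sumZ => l; exact: lexbound_KZ. Qed.

Lemma mcoeff_mx_act (A : 'M['F_p]_n) k : (mx_act A I k)@_d = (A *m C) k 0.
Proof. by rewrite mcoeff_sumZ mxE; apply: eq_bigr => l _; rewrite I_lead.2.1. Qed.

Lemma KZ_lead_coef (i : 'I_n) :
  \sum_(j < n | (i < j)%N) (Omega p m i j *m C) = (q * d i)%:R *: C.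
Proof.
apply/matrixP => k z; rewrite (ord1 z) summxE !mxE.
set mu := (\sum_(l | l != i) lexp_XsubX i l)%MM.
set s := \prod_(l | l != i) (-1) ^+ (l < i)%N : 'F_p.
have s_neq0 : s != 0 by apply/prodf_neq0 => l _; rewrite signr_eq0.
have [vdm_bound vdm_top] : lexlead (\prod_(l | l != i) ('X_i - 'X_l)) mu s.
  by apply: lexlead_prod_XsubX => l; rewrite eq_sym.
have lhs_coef : (mderiv i (I k) * 'X_i * \prod_(l | l != i) ('X_i - 'X_l))@_(d + mu)
    = C k 0 *+ d i * s.
  rewrite mcoeffM_lexbound //; last exact/lexbound_mderivMX/lexbound_KZ.
  by rewrite mcoeff_mderivMX vdm_top -I_lead.2.1.
have rhs_coef j : j != i ->
    (mx_act (Omega p m i j) I k * ('X_i * \prod_(l | (l != i) && (l != j)) ('X_i - 'X_l)))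
      @_(d + mu) = if (i < j)%N then (Omega p m i j *m C) k 0 * s else 0.
  move=> ne_ji; rewrite mcoeff_mul_XsubX_cofactor ?mcoeff_mx_act 1?eq_sym //.
  exact: lexbound_mx_act.
have := congr1 (mcoeff (d + mu)%MM) (KZ_denominators_cleared i k).
rewrite mcoeffMn lhs_coef raddf_sum (eq_bigr _ rhs_coef).
rewrite -big_mkcondr (eq_bigl (fun j : 'I_n => (i < j)%N)) => [eq_coef|j]; last first.
  by apply: andb_idl => lt_ij; rewrite -val_eqE gtn_eqF.
apply: (mulIf s_neq0); rewrite mulr_suml -eq_coef.
by rewrite -mulrnAl -mulrnA mulnC mulr_natl.
Qed.

Lemma KZ_lead_weights : \sum_(j < n) (m j)%:R * C j 0 = 0.
Proof.
transitivity ((\sum_(j < n) (m j)%:R *: I j)@_d); last by rewrite I_KZ.2 mcoeff0.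
by rewrite mcoeff_sumZ; apply: eq_bigr => j _; rewrite I_lead.2.1.
Qed.

Lemma KZ_lead_exponent_last (k : 'I_n) : val k = n.-1 -> (d k %% p = 0)%N.
Proof.
move=> k_last; have /eqP : (q * d k)%:R *: C = 0.
  rewrite -KZ_lead_coef big_pred0 // => j; apply/negbTE.
  by rewrite -leqNgt k_last -ltnS (ltn_predK (ltn_ord j)).
rewrite scaler_eq0 (negbTE I_lead.1) orbF -(dvdn_pcharf (pchar_Fp p_pr)).
by rewrite Euclid_dvdM // (negbTE p_ndvd_q) => /eqP.
Qed.

End KZLeadingTerm.

Theorem lemma5p1 (p q n : nat) (m : 'I_n -> nat)
  (hp : prime p) (hq : prime q) (hn2 : (2 <= n)%N) (hpn : (n < p)%N)
  (hpq : (q < p)%N)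
  (hm : forall i, (0 < m i)%N /\ (m i < q)%N)
  (I : 'I_n -> {mpoly 'F_p[n]})
  (hI0 : exists k, I k != 0)
  (hKZ : is_KZ_solution q m I)
  (C : 'cV['F_p]_n) (d : 'X_{1..n})
  (hlead : is_id_leading_term I C d) :
  \sum_(j < n) (m j)%:R * C j 0 = 0
  /\ (forall j : 'I_n, (j < n.-1)%N ->
        \sum_(l < n | (j < l)%N) (Omega p m j l *m C) = (q * d j)%:R *: C)
  /\ (forall k : 'I_n, val k = n.-1 -> d k %% p = 0)%N.
Proof.
have p_ndvd_q : ~~ (p %| q)%N by rewrite gtnNdvd ?prime_gt0.
split; first exact: (KZ_lead_weights hKZ hlead).
split; first by move=> j _; apply: (KZ_lead_coef hp p_ndvd_q hKZ hlead).
by move=> k; apply: (KZ_lead_exponent_last hp p_ndvd_q hKZ hlead).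
Qed.
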